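(* Let $K/\mathbb{Q}_p$ be a finite extension with ring of integers $A$, uniformizer $\pi$ and ramification index $e$, and suppose $\log_p\frac{e}{p-1}$ is not an integer. Let $n$ be a positive integer and let $I_n$ be the ideal of $A$ generated by all $a^n-1$ with $a\in A$, $a\equiv1\bmod\pi$. Then $A/I_n\cong A/\pi^i$, where $i=e\big(\nu_p(n)-\lceil\log_p\frac{e}{p-1}\rceil\big)+p^{\lceil\log_p\frac{e}{p-1}\rceil}$ if $\lceil\log_p\frac{e}{p-1}\rceil\le\nu_p(n)$, and $i=p^{\nu_p(n)}$ if $\lceil\log_p\frac{e}{p-1}\rceil>\nu_p(n)$.
   Context: $\nu_p$ denotes the $p$-adic valuation. *)

From HB Require Import structures.
From mathcomp Require Import all_boot all_order all_algebra.
Set Implicit Arguments. Unset Strict Implicit. Unset Printing Implicit Defensive.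
Import Order.TTheory GRing.Theory Num.Theory.
Local Open Scope ring_scope.

Definition dvdA (A : comNzRingType) (d x : A) : Prop := exists y : A, x = d * y.

Definition is_DVR_with_uniformizer (A : idomainType) (pi : A) : Prop :=
  pi != 0 /\ pi \isn't a GRing.unit /\
  (forall a : A, a != 0 -> exists (u : A) (k : nat), u \is a GRing.unit /\ a = u * pi ^+ k).

Definition pi_adically_complete (A : idomainType) (pi : A) : Prop :=
  forall x : nat -> A, (forall k : nat, dvdA (pi ^+ k) (x k.+1 - x k)) ->
    exists l : A, forall k : nat, dvdA (pi ^+ k) (l - x k).

Definition char_zero (A : idomainType) : Prop := forall m : nat, (m.+1)%:R != 0 :> A.

Definition finite_residue_field (A : idomainType) (pi : A) : Prop :=
  exists s : seq A, forall a : A, exists2 b, b \in s & dvdA pi (a - b).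

(* A is the ring of integers of a finite extension K of Q_p, with uniformizer pi
   and ramification index e (p = unit * pi^e).  Equivalently: A is a complete DVR
   of characteristic 0 with finite residue field of characteristic p. *)
Definition padic_ring_of_integers (A : idomainType) (p : nat) (pi : A) (e : nat) : Prop :=
  prime p /\ (0 < e)%N /\ is_DVR_with_uniformizer pi /\ pi_adically_complete pi /\
  char_zero A /\ finite_residue_field pi /\
  exists u : A, u \is a GRing.unit /\ p%:R = u * pi ^+ e.

Definition I_ideal (A : idomainType) (pi : A) (n : nat) (x : A) : Prop :=
  exists s : seq (A * A),
    (forall q, q \in s -> dvdA pi (q.2 - 1)) /\
    x = \sum_(q <- s) q.1 * (q.2 ^+ n - 1).

(* A/I and A/J are isomorphic as rings (I, J given as membership predicates of
   ideals): phi : A -> A induces a ring isomorphism A/I -> A/J. *)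
Definition quotients_isomorphic (A : comNzRingType) (I J : A -> Prop) : Prop :=
  exists phi : A -> A,
    (forall x y, I (x - y) <-> J (phi x - phi y)) /\
    (forall x y, J (phi (x + y) - (phi x + phi y))) /\
    (forall x y, J (phi (x * y) - phi x * phi y)) /\
    J (phi 1 - 1) /\
    (forall z, exists x, J (z - phi x)).

From HB Require Import structures.
From mathcomp Require Import all_boot all_order all_algebra.
From mathcomp Require Import zify ring.
Set Implicit Arguments. Unset Strict Implicit. Unset Printing Implicit Defensive.
Import Order.TTheory GRing.Theory Num.Theory.
Local Open Scope ring_scope.

(* Write n = p^k m with p coprime to m.  The binomial expansion
   (1 + x)^p - 1 = x^p + p x (1 + x T), with p = unit * pi^e, shows that if
   pi^j divides x then pi^min(pj, e+j) divides (1 + x)^p - 1, with equality of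
   valuations when x has valuation exactly j and (p-1) j <> e, because one of
   the two summands then strictly dominates.  Iterating from j = 1, every
   a^(p^k) - 1 with a = 1 mod pi is divisible by pi^nu, where nu is the k-th
   iterate, and (1 + pi)^(p^k) - 1 has valuation exactly nu: the hypothesis
   that e/(p-1) is not a power of p excludes (p-1) j = e along the way.
   Raising further to the power m only multiplies by the unit
   1 + b + ... + b^(m-1), which is m modulo pi.  Hence I_n = (pi^nu), and
   solving the recursion gives nu = p^k for k <= c and p^c + e (k - c) beyond. *)

Section Divisibility.
Variable R : comNzRingType.
Implicit Types d x y : R.

Lemma dvdA0 d : dvdA d 0.
Proof. by exists 0; rewrite mulr0. Qed.

Lemma dvdA_add d x y : dvdA d x -> dvdA d y -> dvdA d (x + y).
Proof. by move=> [a ->] [b ->]; exists (a + b); rewrite mulrDr. Qed.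

Lemma dvdA_mull d x y : dvdA d x -> dvdA d (y * x).
Proof. by move=> [a ->]; exists (y * a); rewrite mulrCA. Qed.

Lemma dvdA_mulr d x y : dvdA d x -> dvdA d (x * y).
Proof. by rewrite mulrC; apply: dvdA_mull. Qed.

Lemma dvdA_sum (I : Type) (r : seq I) (P : pred I) (F : I -> R) d :
  (forall i, P i -> dvdA d (F i)) -> dvdA d (\sum_(i <- r | P i) F i).
Proof. by move=> dF; apply: big_ind => //; [apply: dvdA0 | apply: dvdA_add]. Qed.

Lemma dvdA_exp2l x m n : (m <= n)%N -> dvdA (x ^+ m) (x ^+ n).
Proof. by move=> le_mn; exists (x ^+ (n - m)); rewrite -exprD subnKC. Qed.

Lemma dvdA_trans d x y : dvdA d x -> dvdA x y -> dvdA d y.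
Proof. by move=> [a ->] [b ->]; exists (a * b); rewrite mulrA. Qed.

Lemma dvdA_subX1 x m : dvdA (x - 1) (x ^+ m - 1).
Proof. by rewrite subrX1; exists (\sum_(i < m) x ^+ i). Qed.

End Divisibility.

Lemma quotients_isomorphic_id (R : comNzRingType) (I J : R -> Prop) :
  J 0 -> (forall z, I z <-> J z) -> quotients_isomorphic I J.
Proof.
move=> J0 IJ; have J_subrr x : J (x - x) by rewrite subrr.
exists id; split=> [x y|]; first exact: IJ.
by do 2!split=> [x y|] //; split=> [|z] //; exists z.
Qed.

Lemma expr1Dn_prime (R : comNzRingType) (x : R) (p : nat) : prime p ->
  exists T, (1 + x) ^+ p - 1 = x ^+ p + p%:R * x * (1 + x * T).
Proof.
case: p => [|[|q]] // pr_p.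
set S := \sum_(i < q) x ^+ i *+ ('C(q.+2, i.+2) %/ q.+2).
have middle : \sum_(i < q) x ^+ i.+2 *+ 'C(q.+2, i.+2) = q.+2%:R * x * x * S.
  rewrite mulr_sumr; apply: eq_bigr => i _.
  have dvd_p : (q.+2 %| 'C(q.+2, i.+2))%N.
    by apply: prime_dvd_bin => //; rewrite !ltnS ltn_ord.
  rewrite -{1}(divnK dvd_p) mulrnA !exprS -!mulrnAr -mulr_natl.
  by rewrite !mulrA [x * x * _]mulrC !mulrA.
exists S; rewrite [1 + x]addrC exprD1n big_ord_recr big_ord_recl big_ord_recl /=.
clearbody S; rewrite expr0 bin0 binn bin1 middle mulr1n expr1 -mulr_natl; ring.
Qed.

(* The pi-adic valuation of (1 + pi)^(p^t) - 1 when p = unit * pi^e. *)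
Definition nu_pexp (p e t : nat) : nat := iter t (fun j => minn (p * j) (e + j)) 1.

Section DiscreteValuationRing.
Variables (A : idomainType) (pi : A).
Hypothesis pi_nunit : pi \isn't a GRing.unit.
Hypothesis pi_factor : forall a : A, a != 0 ->
  exists (u : A) (k : nat), u \is a GRing.unit /\ a = u * pi ^+ k.

Lemma unit_neq_pi_mul (w s : A) : w \is a GRing.unit -> w <> pi * s.
Proof.
move=> wU ws; move/negP: pi_nunit; apply; apply/unitrPr.
by exists (s * w^-1); rewrite mulrA -ws divrr.
Qed.

Lemma unitrD_pi_mul (w t : A) : w \is a GRing.unit -> w + pi * t \is a GRing.unit.
Proof.
move=> wU; have [z0|nz] := eqVneq (w + pi * t) 0.
  exfalso; apply: (unit_neq_pi_mul (s := - t) wU).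
  by rewrite mulrN; apply/eqP; rewrite -addr_eq0 z0.
have [u [[|k] [uU E]]] := pi_factor nz; first by rewrite E expr0 mulr1.
exfalso; apply: (unit_neq_pi_mul (s := u * pi ^+ k - t) wU).
by rewrite -[w](addrK (pi * t)) E exprS; ring.
Qed.

Lemma pi_exp_unit_add N (w r : A) : w \is a GRing.unit -> dvdA (pi ^+ N.+1) r ->
  exists2 v, v \is a GRing.unit & pi ^+ N * w + r = pi ^+ N * v.
Proof.
move=> wU [s ->]; exists (w + pi * s); first exact: unitrD_pi_mul.
by rewrite exprSr -mulrA mulrDr.
Qed.

Variables (p e : nat) (u0 : A).
Hypothesis pr_p : prime p.
Hypothesis u0_unit : u0 \is a GRing.unit.
Hypothesis p_eq : p%:R = u0 * pi ^+ e.

Lemma dvdA_expr1Dn_sub1 j (x : A) : dvdA (pi ^+ j) x ->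
  dvdA (pi ^+ minn (p * j) (e + j)) ((1 + x) ^+ p - 1).
Proof.
move=> [y ->]; have [T ->] := expr1Dn_prime (pi ^+ j * y) pr_p.
apply: dvdA_add.
  apply: (dvdA_trans (dvdA_exp2l _ (geq_minl _ _))).
  by exists (y ^+ p); rewrite exprMn -exprM mulnC.
apply: (dvdA_trans (dvdA_exp2l _ (geq_minr _ _))).
by exists (u0 * y * (1 + pi ^+ j * y * T)); rewrite p_eq exprD; ring.
Qed.

Lemma expr1Dn_sub1_exact j (y : A) : y \is a GRing.unit -> (p.-1 * j != e)%N ->
  exists2 v, v \is a GRing.unit &
    (1 + pi ^+ j * y) ^+ p - 1 = pi ^+ minn (p * j) (e + j) * v.
Proof.
move=> yU ne_je; have [T ->] := expr1Dn_prime (pi ^+ j * y) pr_p.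
set w := 1 + pi ^+ j * y * T.
have -> : p%:R * (pi ^+ j * y) * w = pi ^+ (e + j) * (u0 * y * w).
  by rewrite p_eq exprD; ring.
rewrite exprMn -exprM mulnC.
(* (p - 1) j <> e says that the valuations p j and e + j of the two summands differ. *)
case: ltngtP => [lt_pe | gt_pe | eq_pe].
- apply: pi_exp_unit_add; first exact: unitrX.
  exact/dvdA_mulr/dvdA_exp2l.
- rewrite addrC; apply: pi_exp_unit_add; last exact/dvdA_mulr/dvdA_exp2l.
  rewrite !unitrM u0_unit yU /w; case: j gt_pe {w ne_je} => [|j] gt_pe.
    by rewrite muln0 in gt_pe.
  by rewrite exprS -!mulrA unitrD_pi_mul ?unitr1.
- by move: ne_je; have p_gt1 := prime_gt1 pr_p; lia.
Qed.

Lemma dvdA_pexp_sub1 (a : A) t : dvdA pi (a - 1) ->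
  dvdA (pi ^+ nu_pexp p e t) (a ^+ (p ^ t) - 1).
Proof.
move=> a1; elim: t => [|t IH]; first by rewrite expn0 !expr1.
have -> : a ^+ (p ^ t.+1) = (1 + (a ^+ (p ^ t) - 1)) ^+ p.
  by rewrite expnSr exprM addrCA subrr addr0.
exact: dvdA_expr1Dn_sub1.
Qed.

Lemma onepi_pexp_sub1 t : (forall s, p.-1 * nu_pexp p e s != e)%N ->
  exists2 v, v \is a GRing.unit & (1 + pi) ^+ (p ^ t) - 1 = pi ^+ nu_pexp p e t * v.
Proof.
move=> ne_e; elim: t => [|t [v vU IH]].
  by exists 1; rewrite ?unitr1 // expn0 !expr1 mulr1 addrAC subrr add0r.
have -> : (1 + pi) ^+ (p ^ t.+1) = (1 + pi ^+ nu_pexp p e t * v) ^+ p.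
  by rewrite expnSr exprM -IH addrCA subrr addr0.
exact: expr1Dn_sub1_exact.
Qed.

Hypothesis e_gt0 : (0 < e)%N.
Hypothesis char0 : forall m : nat, m.+1%:R != 0 :> A.

Lemma natr_unit_coprime m :
  (0 < m)%N -> coprime p m -> (m%:R : A) \is a GRing.unit.
Proof.
case: m => // m _ cop.
have [u [[|k] [uU E]]] := pi_factor (char0 m); first by rewrite E expr0 mulr1.
exfalso; have [a _] := Bezoutl p (ltn0Sn m).
rewrite gcdnC (eqP cop) => /dvdnP[b bezout].
have one_eq : 1 = b%:R * m.+1%:R - a%:R * p%:R :> A.
  by rewrite -!natrM -bezout natrD addrK.
case: e p_eq e_gt0 => // e' p_eq' _.
apply: (unit_neq_pi_mul (s := b%:R * (u * pi ^+ k) - a%:R * (u0 * pi ^+ e')) (unitr1 A)).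
by rewrite [LHS]one_eq E p_eq' !exprS; ring.
Qed.

Lemma sum_expr_unit (b : A) m : (0 < m)%N -> coprime p m -> dvdA pi (b - 1) ->
  \sum_(i < m) b ^+ i \is a GRing.unit.
Proof.
move=> m_gt0 cop b1.
have [r Sr] : dvdA pi (\sum_(i < m) b ^+ i - m%:R).
  have -> : \sum_(i < m) b ^+ i - m%:R = \sum_(i < m) (b ^+ i - 1).
    by rewrite sumrB sumr_const card_ord.
  by apply: dvdA_sum => i _; apply: dvdA_trans b1 (dvdA_subX1 b i).
have -> : \sum_(i < m) b ^+ i = m%:R + pi * r by rewrite -Sr addrC subrK.
by rewrite unitrD_pi_mul ?natr_unit_coprime.
Qed.

Lemma I_idealE n : (0 < n)%N -> (forall s, p.-1 * nu_pexp p e s != e)%N ->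
  forall z, I_ideal pi n z <-> dvdA (pi ^+ nu_pexp p e (logn p n)) z.
Proof.
move=> n_gt0 ne_e z.
have [m cop n_eq] := pfactor_coprime pr_p n_gt0.
have m_gt0 : (0 < m)%N by move: n_gt0; rewrite n_eq muln_gt0 => /andP[].
rewrite mulnC in n_eq; set k := logn p n in n_eq *.
split=> [[s [s1 ->]] | [y ->]].
  rewrite big_seq; apply: dvdA_sum => q /s1 q1; apply: dvdA_mull.
  rewrite n_eq exprM; exact: dvdA_trans (dvdA_pexp_sub1 k q1) (dvdA_subX1 _ m).
have [v vU gen] := onepi_pexp_sub1 k ne_e.
have pi_gen : dvdA pi ((1 + pi) ^+ (p ^ k) - 1).
  by have := dvdA_subX1 (1 + pi) (p ^ k); rewrite addrAC subrr add0r.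
have SU := sum_expr_unit m_gt0 cop pi_gen.
have vSU : v * \sum_(i < m) ((1 + pi) ^+ (p ^ k)) ^+ i \is a GRing.unit.
  by rewrite unitrM vU.
exists [:: (y / (v * \sum_(i < m) ((1 + pi) ^+ (p ^ k)) ^+ i), 1 + pi)]; split.
  by move=> q; rewrite inE => /eqP -> /=; exists 1; rewrite mulr1 addrAC subrr add0r.
by rewrite big_seq1 /= n_eq exprM subrX1 gen -(mulrA (pi ^+ _)) mulrCA divrK.
Qed.

End DiscreteValuationRing.

Section NuPexpClosedForm.
Variables (p e c : nat).
Hypothesis p_gt1 : (1 < p)%N.
Hypothesis below_e : forall t, (t < c)%N -> (p.-1 * p ^ t < e)%N.
Hypothesis e_below : (e < p.-1 * p ^ c)%N.

Lemma nu_pexp_closed t :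
  nu_pexp p e t = if (t <= c)%N then (p ^ t)%N else (p ^ c + e * (t - c))%N.
Proof.
elim: t => [|t IH] //=; rewrite IH expnS.
have [lt_tc | le_ct] := ltnP t c.
  by rewrite (ltnW lt_tc); have := below_e lt_tc; nia.
rewrite subSn //; case: leqP => [le_tc | lt_ct].
  have -> : t = c by lia.
  by rewrite subnn; have := e_below; nia.
by have := e_below; nia.
Qed.

Lemma nu_pexp_neq t : (p.-1 * nu_pexp p e t != e)%N.
Proof.
rewrite nu_pexp_closed; case: ltngtP => [lt_tc | lt_ct | ->] /=.
- by have := below_e lt_tc; lia.
- by have := e_below; nia.
- by have := e_below; lia.
Qed.

Lemma nu_pexp_logn (k i : nat) :
  i%:Q = (if c%:Z <= k%:Z then e%:Q * (k%:Q - c%:Z%:~R) + p%:Q ^ c%:Z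
          else p%:Q ^+ k) ->
  i = nu_pexp p e k.
Proof.
have natQ (m : nat) : m%:Q = m%:R by [].
rewrite !natQ nu_pexp_closed lez_nat; case: leqP => [le_ck | lt_kc] i_eq.
  apply/eqP; rewrite -(eqr_nat rat) i_eq; case: (leqP k c) => [le_kc | _].
    have -> : k = c by lia.
    by rewrite subrr mulr0 add0r natrX.
  by rewrite natrD natrM natrB // natrX addrC.
by rewrite ltnW //; apply/eqP; rewrite -(eqr_nat rat) i_eq natrX.
Qed.

End NuPexpClosedForm.

Lemma ceil_log_natP (p e : nat) (c : int) : (1 < p)%N -> (0 < e)%N ->
  (forall k : int, e%:Q / (p.-1)%:Q != p%:Q ^ k) ->
  p%:Q ^ (c - 1) < e%:Q / (p.-1)%:Q <= p%:Q ^ c ->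
  exists cn : nat, [/\ c = cn, forall t, (t < cn)%N -> (p.-1 * p ^ t < e)%N
                    & (e < p.-1 * p ^ cn)%N].
Proof.
move=> p_gt1 e_gt0 not_pow /andP[lower upper].
have pm1_gt0 : (0 : rat) < (p.-1)%:R by rewrite ltr0n; lia.
case: c lower upper (not_pow c) => [cn | m] lower upper ne_c; last first.
  have le_ep : (e * p ^ m.+1 <= p.-1)%N.
    have : e%:R / (p.-1)%:R <= ((p%:R : rat) ^+ m.+1)^-1 := upper.
    have pm_gt0 : (0 : rat) < p%:R ^+ m.+1 by rewrite exprn_gt0 // ltr0n; lia.
    by rewrite ler_pdivrMr // mulrC ler_pdivlMr // -natrX -!natrM ler_nat.
  have : (p ^ 1 <= p ^ m.+1)%N by rewrite leq_pexp2l; lia.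
  by rewrite expn1; nia.
exists cn; split => //.
  case: cn {upper ne_c} lower => // t lower s lt_st.
  have tE : (t.+1 : int) - 1 = t by rewrite -addn1 PoszD addrK.
  rewrite tE in lower.
  have : (p%:R : rat) ^+ t < e%:R / (p.-1)%:R := lower.
  rewrite ltr_pdivlMr // -natrX -natrM ltr_nat.
  apply: leq_ltn_trans; rewrite mulnC leq_mul2r leq_pexp2l ?orbT //; lia.
have lt_up : e%:Q / (p.-1)%:Q < p%:Q ^+ cn by rewrite lt_neqAle ne_c upper.
by move: lt_up; rewrite ltr_pdivrMr // -natrX -natrM ltr_nat mulnC.
Qed.

Theorem mainTheorem15 (A : idomainType) (p : nat) (pi : A) (e : nat)
  (hA : @padic_ring_of_integers A p pi e)
  (hlog : forall k : int, (e%:Q / (p.-1)%:Q) != (p%:Q) ^ k)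
  (n : nat) (hn : (0 < n)%N)
  (c : int) (hc : (p%:Q) ^ (c - 1) < e%:Q / (p.-1)%:Q <= (p%:Q) ^ c)
  (i : nat)
  (hi : i%:Q = (if c <= (logn p n)%:Z
                then e%:Q * ((logn p n)%:Q - c%:~R) + (p%:Q) ^ c
                else (p%:Q) ^+ (logn p n))) :
  quotients_isomorphic (I_ideal pi n) (dvdA (pi ^+ i)).
Proof.
have [pr_p [e_gt0 [[_ [pi_nunit pi_factor]] [_ [char0 [_ [u0 [u0_unit p_eq]]]]]]]]
  := hA.
have p_gt1 := prime_gt1 pr_p.
have [cn [c_eq below_e e_below]] := ceil_log_natP p_gt1 e_gt0 hlog hc.
rewrite c_eq in hi; rewrite (nu_pexp_logn p_gt1 below_e e_below hi).
apply: quotients_isomorphic_id; first exact: dvdA0.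
exact: (I_idealE pi_nunit pi_factor pr_p u0_unit p_eq e_gt0 char0 hn
  (nu_pexp_neq p_gt1 below_e e_below)).
Qed.
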